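(* Let $R$ be a ring with identity, $(S,\leq)$ a strictly ordered monoid which is quasitotally ordered, and $\omega:S\to\mathrm{End}(R)$ a monoid homomorphism. Assume $R$ is $S$-compatible and $(S,\omega)$-Armendariz, and let $A=R[[S,\omega]]$. (1) If $R$ is a generalized right Baer ring, then $A$ is a generalized right Baer ring. (2) If $R$ is a generalized right quasi-Baer ring, then $A$ is a generalized right quasi-Baer ring.
   Context: All rings are associative with identity. For a nonempty subset $X$ of a ring $R$, $r_R(X)=\{a\in R : xa=0 \text{ for all } x\in X\}$ is its right annihilator, and for a positive integer $n$, $X^n$ denotes the set of all products $a_1a_2\cdots a_n$ with $a_i\in X$ for $1\le i\le n$. A ring $R$ is generalized right Baer if for every nonempty subset $X$ of $R$ there exist a positive integer $n$ (depending on $X$) and an idempotent $e\in R$ with $r_R(X^n)=eR$. A ring $R$ is generalized right quasi-Baer if for every right ideal $I$ of $R$ there exist a positive integer $n$ (depending on $I$) and an idempotent $e\in R$ with $r_R(I^n)=eR$. An ordered monoid $(S,\leq)$ is a monoid with a partial order such that $u\le v$ implies $ut\le vt$ and $tu\le tv$ for all $t\in S$; it is strictly ordered if $u<v$ implies $ut<vt$ and $tu<tv$ for all $t\in S$. It is quasitotally ordered if $\leq$ can be refined to an order $\preceq$ with respect to which $S$ is a strictly totally ordered monoid. A subset of $S$ is artinian if every strictly decreasing sequence in it is finite, and narrow if every subset of pairwise incomparable elements is finite. Given a ring $R$, a strictly ordered monoid $(S,\le)$ and a monoid homomorphism $\omega:S\to\mathrm{End}(R)$, $s\mapsto\omega_s$,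 the ring of skew generalized power series $R[[S,\omega]]$ is the set of all maps $f:S\to R$ whose support $\mathrm{supp}(f)=\{s\in S: f(s)\neq 0\}$ is artinian and narrow, with pointwise addition and multiplication $(fg)(s)=\sum_{(u,v)\in X_s(f,g)} f(u)\,\omega_u(g(v))$, where $X_s(f,g)=\{(u,v)\in S\times S: uv=s,\ f(u)\ne0,\ g(v)\ne0\}$ (a finite set; an empty sum is $0$). An endomorphism $\sigma$ of $R$ is compatible if for all $a,b\in R$: $ab=0 \iff a\sigma(b)=0$. $R$ is $S$-compatible if $\omega_s$ is compatible for every $s\in S$. $R$ is $(S,\omega)$-Armendariz if whenever $f,g\in R[[S,\omega]]$ satisfy $fg=0$, then $f(s)\,\omega_s(g(t))=0$ for all $s,t\in S$. *)

From HB Require Import structures.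
From mathcomp Require Import all_boot all_order all_algebra.
From mathcomp Require Import boolp classical_sets functions cardinality fsbigop.
Set Implicit Arguments. Unset Strict Implicit. Unset Printing Implicit Defensive.
Import Order.TTheory GRing.Theory.
Local Open Scope classical_set_scope.
Local Open Scope ring_scope.

(* Generic "ring" notions relative to a carrier set C : set T with           *)
(* operations add, opp, mul and zero (used both for R, with C = setT, and    *)
(* for A = R[[S,omega]], with C = the set of admissible series).             *)
Section GenericRing.
Variables (T : Type) (C : set T) (zero : T)
          (add : T -> T -> T) (opp : T -> T) (mul : T -> T -> T).

Definition rann (X : set T) : set T :=
  [set a | C a /\ forall x, X x -> mul x a = zero].

(* X^n (n >= 1) : all products a_1 a_2 ... a_n with a_i in X *)
Definition setpow (X : set T) (n : nat) : set T :=
  [set y | exists (a : T) (s : seq T),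
      [/\ X a, (forall i, (i < size s)%N -> X (nth a s i)), (size s).+1 = n &
          y = foldl mul a s]].

Definition idempotent (e : T) : Prop := mul e e = e.

Definition lprinc (e : T) : set T := [set mul e a | a in C].

Definition right_ideal (I : set T) : Prop :=
  [/\ I `<=` C, I zero,
      (forall x y, I x -> I y -> I (add x y)),
      (forall x, I x -> I (opp x)) &
      (forall x r, I x -> C r -> I (mul x r))].

Definition gen_right_Baer : Prop :=
  forall X : set T, X `<=` C -> X !=set0 ->
    exists (n : nat) (e : T), [/\ (0 < n)%N, C e, idempotent e &
      rann (setpow X n) = lprinc e].

Definition gen_right_quasi_Baer : Prop :=
  forall I : set T, right_ideal I ->
    exists (n : nat) (e : T), [/\ (0 < n)%N, C e, idempotent e &
      rann (setpow I n) = lprinc e].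
End GenericRing.

Definition ring_gen_right_Baer (R : pzRingType) : Prop :=
  gen_right_Baer [set: R] 0 (@GRing.mul R).
Definition ring_gen_right_quasi_Baer (R : pzRingType) : Prop :=
  gen_right_quasi_Baer [set: R] 0 (@GRing.add R) (@GRing.opp R) (@GRing.mul R).

Section OrderedMonoid.
Variables (S : Type) (op : S -> S -> S) (one : S).

Definition is_monoid : Prop :=
  [/\ (forall x y z, op x (op y z) = op (op x y) z),
      (forall x, op one x = x) & (forall x, op x one = x)].

Definition is_partial_order (le : S -> S -> Prop) : Prop :=
  [/\ (forall x, le x x),
      (forall x y, le x y -> le y x -> x = y) &
      (forall x y z, le x y -> le y z -> le x z)].

Definition lt_of (le : S -> S -> Prop) (u v : S) : Prop := le u v /\ u <> v.

Definition ordered_monoid (le : S -> S -> Prop) : Prop :=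
  [/\ is_monoid, is_partial_order le &
      forall u v t, le u v -> le (op u t) (op v t) /\ le (op t u) (op t v)].

Definition strictly_ordered_monoid (le : S -> S -> Prop) : Prop :=
  ordered_monoid le /\
  forall u v t, lt_of le u v ->
    lt_of le (op u t) (op v t) /\ lt_of le (op t u) (op t v).

Definition total_rel (le : S -> S -> Prop) : Prop :=
  forall x y, le x y \/ le y x.

Definition quasitotally_ordered (le : S -> S -> Prop) : Prop :=
  exists le' : S -> S -> Prop,
    [/\ (forall u v, le u v -> le' u v), strictly_ordered_monoid le' &
        total_rel le'].

Definition artinian (le : S -> S -> Prop) (X : set S) : Prop :=
  ~ exists a : nat -> S, forall n, X (a n) /\ lt_of le (a n.+1) (a n).

Definition narrow (le : S -> S -> Prop) (X : set S) : Prop :=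
  forall Y : set S, Y `<=` X ->
    (forall u v, Y u -> Y v -> u <> v -> ~ le u v /\ ~ le v u) ->
    finite_set Y.
End OrderedMonoid.

Section SkewSeries.
Variables (R : pzRingType) (S : choiceType) (op : S -> S -> S) (one : S)
          (le : S -> S -> Prop) (omega : S -> {rmorphism R -> R}).

Definition monoid_hom_End : Prop :=
  (forall a, omega one a = a) /\
  (forall s t a, omega (op s t) a = omega s (omega t a)).

Definition supp (f : S -> R) : set S := [set s | f s <> 0].

Definition skew_series : set (S -> R) :=
  [set f | artinian le (supp f) /\ narrow le (supp f)].

Definition Xs (f g : S -> R) (s : S) : set (S * S) :=
  [set p | op p.1 p.2 = s /\ f p.1 <> 0 /\ g p.2 <> 0].

Definition ss_zero : S -> R := fun _ => 0.
Definition ss_add (f g : S -> R) : S -> R := fun s => f s + g s.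
Definition ss_opp (f : S -> R) : S -> R := fun s => - f s.
Definition ss_mul (f g : S -> R) : S -> R :=
  fun s => \sum_(p \in Xs f g s) (f p.1 * omega p.1 (g p.2)).

Definition compatible (sigma : R -> R) : Prop :=
  forall a b : R, a * b = 0 <-> a * sigma b = 0.
Definition S_compatible : Prop := forall s, compatible (omega s).

Definition S_omega_Armendariz : Prop :=
  forall f g, skew_series f -> skew_series g -> ss_mul f g = ss_zero ->
    forall s t, f s * omega s (g t) = 0.

Definition series_gen_right_Baer : Prop :=
  gen_right_Baer skew_series ss_zero ss_mul.
Definition series_gen_right_quasi_Baer : Prop :=
  gen_right_quasi_Baer skew_series ss_zero ss_add ss_opp ss_mul.
End SkewSeries.

From Pilot Require Import Defs.
From mathcomp Require Import all_boot all_order all_algebra.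
From mathcomp Require Import boolp classical_sets functions cardinality fsbigop.
Set Implicit Arguments. Unset Strict Implicit. Unset Printing Implicit Defensive.
Import Order.TTheory GRing.Theory.
Local Open Scope classical_set_scope.

(* The whole argument rests on one characterization: if [C] is the set of
   coefficients of the series in [X], a series [g] right-annihilates [X^n]
   exactly when each coefficient of [g] right-annihilates [C^n] in [R]. One
   direction is compatibility of the [omega_s]; the other is the Armendariz
   property, propagated to longer products by multiplying with constant
   series [c_b]. So [r_R(C^n) = eR] gives [r_A(X^n) = c_e A]. For a right
   ideal [J] of [A], [C] is not a right ideal of [R], but compatibility shows
   that [C] and the right ideal it generates have the same [n]-th power
   annihilators. Finiteness of the sums involved comes from describing
   supports of series as well-quasi-ordered subsets of [S]. *)

Lemma infinite_set_injseq (T : Type) (Y : set T) : infinite_set Y ->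
  exists f : nat -> T, (forall n, Y (f n)) /\ injective f.
Proof.
move=> /infiniteP/card_leP[f].
pose g n := val (f (exist _ n (mem_set (I : [set: nat] n)))).
exists g; split => [n|m n]; first exact/set_mem/valP.
by move/val_inj/(@inj _ _ _ f) => /(_ (mem_set I) (mem_set I)) [].
Qed.

Lemma injseq_infinite_set (T : Type) (Y : set T) (f : nat -> T) :
  (forall n, Y (f n)) -> injective f -> infinite_set Y.
Proof.
move=> Yf injf finY; apply: infinite_nat.
have : finite_set (range f) by apply: sub_finite_set finY => _ [n _ <-].
by rewrite (eq_finite_set (inj_card_eq _)) // => x y _ _ /injf.
Qed.

Lemma terminal_or_chain (P : nat -> nat -> Prop) :
  (exists idx : nat -> nat, {homo idx : m n / (m < n)%N} /\
     forall n j, (idx n < j)%N -> ~ P (idx n) j) \/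
  (exists b : nat -> nat, {homo b : m n / (m < n)%N} /\
     forall n, P (b n) (b n.+1)).
Proof.
pose terminal i := forall j, (i < j)%N -> ~ P i j.
have [Hinf|Hfin] := pselect (forall N, exists i, (N <= i)%N /\ terminal i).
  left; have [psi hpsi] := choice Hinf.
  pose idx := fix idx n := if n is m.+1 then psi (idx m).+1 else psi 0.
  exists idx; split; last first.
    by case=> [|n]; [case: (hpsi 0) | case: (hpsi (idx n).+1)].
  apply: homo_ltn => [y x z|n]; first exact: ltn_trans.
  by case: (hpsi (idx n).+1).
right; move: Hfin => /existsNP[N /forallNP notterm].
have /choice[chi hchi] : forall i, exists j, (N <= i)%N -> (i < j)%N /\ P i j.
  move=> i; have [Ni|_] := boolP (N <= i)%N; last by exists 0%N.
  apply: contrapT => /forallNP none; apply: (notterm i); split => // j ij Pij.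
  by apply: (none j) => _.
pose b := fix b n := if n is m.+1 then chi (b m) else N.
have bN n : (N <= b n)%N.
  by elim: n => //= n IH; exact: leq_trans IH (ltnW (hchi _ IH).1).
exists b; split; last by move=> n; exact: (hchi _ (bN n)).2.
apply: homo_ltn => [y x z|n]; first exact: ltn_trans.
exact: (hchi _ (bN n)).1.
Qed.

Definition wqo (T : Type) (le : T -> T -> Prop) (X : set T) :=
  forall a : nat -> T, (forall n, X (a n)) ->
    exists i j, (i < j)%N /\ le (a i) (a j).

Section WellQuasiOrder.
Variables (T : Type) (le : T -> T -> Prop).
Hypothesis le_po : is_partial_order le.

Let le_refl x : le x x. Proof. by case: le_po. Qed.
Let le_anti x y : le x y -> le y x -> x = y.
Proof. by case: le_po => _ + _; apply. Qed.
Let le_trans x y z : le x y -> le y z -> le x z.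
Proof. by case: le_po => _ _; apply. Qed.

Lemma wqo_subset (X Y : set T) : Y `<=` X -> wqo le X -> wqo le Y.
Proof. by move=> YX hw a Ya; apply: hw => n; apply: YX. Qed.

Lemma artinian_narrow_wqo (X : set T) :
  artinian le X -> narrow le X -> wqo le X.
Proof.
move=> hart hnar a Xa; apply: contrapT => bad.
have incomp i j : (i < j)%N -> ~ le (a i) (a j).
  by move=> ij lij; apply: bad; exists i, j.
have [[idx [idx_inc term]] | [b [_ desc]]] :=
  terminal_or_chain (fun i j => lt_of le (a j) (a i)); last first.
  by apply: hart; exists (a \o b) => n; split; [apply: Xa | apply: desc].
have anti m n : m != n -> ~ le (a (idx m)) (a (idx n)).
  case: ltngtP => // [mn|nm] _ lmn; first exact: incomp (idx_inc _ _ mn) lmn.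
  apply: (term n (idx m) (idx_inc _ _ nm)); split => // e.
  by apply: (incomp _ _ (idx_inc _ _ nm)); rewrite e.
have inj_a : injective (a \o idx).
  move=> m n /= e; apply/eqP; apply: contrapT => /negP /anti.
  by rewrite e => /(_ (le_refl _)).
apply: (injseq_infinite_set (Y := range (a \o idx))) inj_a _ => [n|].
  by exists n.
apply: hnar => [_ [n _ <-]|_ _ [m _ <-] [n _ <-] neq]; first exact: Xa.
have mn : m != n by apply: contra_notN neq => /eqP ->.
by split; apply: anti; rewrite // eq_sym.
Qed.

Lemma wqo_chain (X : set T) (a : nat -> T) : wqo le X -> (forall n, X (a n)) ->
  exists phi : nat -> nat, {homo phi : m n / (m < n)%N} /\
    {homo a \o phi : m n / (m < n)%N >-> le m n}.
Proof.
move=> hw Xa.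
have [[idx [idx_inc term]] | [b [b_inc chain]]] :=
  terminal_or_chain (fun i j => le (a i) (a j)).
  have [i [j [ij lij]]] := hw (a \o idx) (fun n => Xa _).
  by case: (term i (idx j) (idx_inc _ _ ij)).
exists b; split => //; apply: homo_ltn => // y x z; exact: le_trans.
Qed.

Lemma wqo_artinian (X : set T) : wqo le X -> artinian le X.
Proof.
move=> hw [a ha].
have dec : {homo a : i j / (i < j)%N >-> lt_of le j i}.
  apply: homo_ltn => [y x z [lyx nyx] [lzy nzy]|n]; last exact: (ha n).2.
  split; first exact: le_trans lzy lyx.
  by move=> ezx; subst; apply: nzy; apply: le_anti.
have [i [j [ij lij]]] := hw a (fun n => (ha n).1).
by case: (dec _ _ ij) => lji; apply; apply: le_anti.
Qed.

Lemma wqo_narrow (X : set T) : wqo le X -> narrow le X.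
Proof.
move=> hw Y YX hY; apply: contrapT => /infinite_set_injseq[f [Yf injf]].
have [i [j [ij lij]]] := hw f (fun n => YX _ (Yf n)).
have nij : f i <> f j by move/injf => eij; rewrite eij ltnn in ij.
by case: (hY _ _ (Yf i) (Yf j) nij).
Qed.

Lemma wqo_setX (U V : set T) : wqo le U -> wqo le V ->
  wqo (fun p q : T * T => le p.1 q.1 /\ le p.2 q.2) (U `*` V).
Proof.
move=> wU wV a UVa.
have [phi [phi_inc le1]] := wqo_chain (a := fst \o a) wU (fun n => (UVa n).1).
have [i [j [ij le2]]] := wV (fun n => (a (phi n)).2) (fun n => (UVa _).2).
by exists (phi i), (phi j); split; [apply: phi_inc | split; first exact: le1].
Qed.

End WellQuasiOrder.

Section StrictlyOrderedMonoid.
Variables (S : Type) (op : S -> S -> S) (one : S) (le : S -> S -> Prop).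
Hypothesis hS : strictly_ordered_monoid op one le.

Let le_po : is_partial_order le. Proof. by case: hS => -[]. Qed.
Let le_op u v t : le u v -> le (op u t) (op v t) /\ le (op t u) (op t v).
Proof. by case: hS => -[_ _ h] _; apply: h. Qed.
Let lt_op u v t :
  lt_of le u v -> lt_of le (op u t) (op v t) /\ lt_of le (op t u) (op t v).
Proof. by case: hS => _; apply. Qed.

Lemma wqo_image2 (U V : set S) : wqo le U -> wqo le V ->
  wqo le [set op u v | u in U & v in V].
Proof.
move=> wU wV z UVz.
have /choice[p hp] : forall n, exists p : S * S, (U `*` V) p /\ op p.1 p.2 = z n.
  by move=> n; have [x Ux [y Vy <-]] := UVz n; exists (x, y).
have [i [j [ij [le1 le2]]]] := wqo_setX le_po wU wV (fun n => (hp n).1).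
exists i, j; split => //; rewrite -(hp i).2 -(hp j).2.
by case: le_po => _ _; apply; [exact: (le_op _ le1).1 | exact: (le_op _ le2).2].
Qed.

(* Two factorizations of [s] that are comparable in both factors coincide:
   strictness forbids [u1 < u2, v1 <= v2] and [u1 = u2, v1 < v2]. *)
Lemma finite_factorizations (U V : set S) (s : S) : wqo le U -> wqo le V ->
  finite_set [set p : S * S | op p.1 p.2 = s /\ U p.1 /\ V p.2].
Proof.
move=> wU wV; apply: contrapT => /infinite_set_injseq[f [hf injf]].
have [i [j [ij [le1 le2]]]] := wqo_setX le_po wU wV (fun n => (hf n).2).
have nij : f i <> f j by move/injf => eij; rewrite eij ltnn in ij.
have [[ei _] [ej _]] := (hf i, hf j).
have [e1|n1] := pselect ((f i).1 = (f j).1).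
  have n2 : (f i).2 <> (f j).2.
    by move=> e2; apply: nij; move: e1 e2; case: (f i) (f j) => ? ? [? ?] /= -> ->.
  by have [_ []] := lt_op (f i).1 (conj le2 n2); rewrite ei e1 ej.
have [[lt ne] _] := lt_op (f i).2 (conj le1 n1).
apply: ne; case: le_po => _ anti _; apply: anti lt _.
by rewrite ei -ej; exact: (le_op (f j).1 le2).2.
Qed.

End StrictlyOrderedMonoid.

Section SetPower.
Variables (T : Type) (mul : T -> T -> T).

Lemma setpow0 (X : set T) : setpow mul X 0 = set0.
Proof. by apply/seteqP; split=> // y [a [s []]]. Qed.

Lemma setpow1 (X : set T) : setpow mul X 1 = X.
Proof.
apply/seteqP; split=> [y [a [[|x s] [Xa _ //= _ ->]]] | y Xy] //.
by exists y, [::].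
Qed.

Lemma setpowS (X : set T) k y : setpow mul X k.+2 y <->
  exists a x, [/\ setpow mul X k.+1 a, X x & y = mul a x].
Proof.
split=> [[a [s [Xa Xs es ->]]] | [a [x [[a0 [s [Xa0 Xs es ->]]] Xx ->]]]].
  case/lastP: s Xs es => [//|s x]; rewrite size_rcons => Xs /succn_inj es.
  exists (foldl mul a s), x; rewrite foldl_rcons; split => //.
    exists a, s; split => // i ilt.
    by have := Xs i; rewrite nth_rcons ilt; apply; exact: ltnW.
  by have := Xs (size s) (ltnSn _); rewrite nth_rcons ltnn eqxx.
exists a0, (rcons s x); rewrite size_rcons foldl_rcons es; split => // i.
rewrite -es ltnS leq_eqVlt => /orP[/eqP ->|ilt]; first by rewrite nth_rcons ltnn eqxx.
by rewrite nth_rcons ilt; apply: Xs.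
Qed.

Lemma setpow_subset (X Y : set T) n : X `<=` Y -> setpow mul X n `<=` setpow mul Y n.
Proof.
move=> XY y [a [s [Xa Xs es ->]]]; exists a, s; split => //; first exact: XY.
by move=> i /Xs; apply: XY.
Qed.

End SetPower.

Section PowerAnnihilator.
Local Open Scope ring_scope.
Variable R : pzRingType.
Implicit Types (C D : set R) (y : R).

Definition annr C n : set R := [set y | forall a, setpow *%R C n a -> a * y = 0].

Lemma rann_setT C n : rann [set: R] 0 *%R (setpow *%R C n) = annr C n.
Proof. by apply/seteqP; split=> [y [_ hy] | y hy]. Qed.

Lemma annr0 C : annr C 0 = setT.
Proof. by apply/seteqP; split=> // y _ a; rewrite setpow0. Qed.

Lemma annr1 C y : annr C 1 y <-> forall c, C c -> c * y = 0.
Proof. by rewrite /annr setpow1. Qed.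

Lemma annrS C k y : annr C k.+2 y <-> forall c, C c -> annr C k.+1 (c * y).
Proof.
split=> [hy c Cc a ha | hy a /setpowS[a' [x [ha' Cx ->]]]].
  by rewrite mulrA; apply: hy; apply/setpowS; exists a, c.
by rewrite -mulrA; exact: hy.
Qed.

Lemma annr_subset C D n : C `<=` D -> annr D n `<=` annr C n.
Proof. by move=> CD y hy a ha; apply: hy; apply: setpow_subset ha. Qed.

Lemma annr_sum (I : Type) (r : seq I) (P : pred I) (F : I -> R) C n :
  (forall i, P i -> annr C n (F i)) -> annr C n (\sum_(i <- r | P i) F i).
Proof. by move=> hF a ha; rewrite mulr_sumr big1 // => i Pi; exact: hF. Qed.

End PowerAnnihilator.

Section RightIdealGenerated.
Local Open Scope ring_scope.
Variable R : pzRingType.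

Definition rideal_gen (C : set R) : set R :=
  [set x | exists l : seq (R * R),
     (forall p, p \in l -> C p.1) /\ x = \sum_(p <- l) p.1 * p.2].

Lemma right_ideal_gen (C : set R) :
  right_ideal [set: R] 0 +%R -%R *%R (rideal_gen C).
Proof.
split=> //; first by exists [::]; rewrite big_nil.
- move=> _ _ [l1 [C1 ->]] [l2 [C2 ->]]; exists (l1 ++ l2); rewrite big_cat.
  by split=> // p; rewrite mem_cat => /orP[/C1|/C2].
- move=> _ [l [Cl ->]]; exists [seq (p.1, - p.2) | p <- l].
  split=> [_ /mapP[p pl ->]|]; first exact: Cl pl.
  by rewrite big_map -sumrN; apply: eq_bigr => p _; rewrite mulrN.
- move=> _ r [l [Cl ->]] _; exists [seq (p.1, p.2 * r) | p <- l].
  split=> [_ /mapP[p pl ->]|]; first exact: Cl pl.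
  by rewrite big_map mulr_suml; apply: eq_bigr => p _; rewrite mulrA.
Qed.

Lemma annr_rideal_gen (C : set R) n :
  (forall c r, C c -> exists2 c', C c' &
     forall a y, a * c' * y = 0 -> a * c * r * y = 0) ->
  annr (rideal_gen C) n = annr C n.
Proof.
move=> absorb; apply/seteqP; split.
  apply: annr_subset => c Cc; exists [:: (c, 1)]; rewrite big_seq1 mulr1.
  by split=> // p; rewrite inE => /eqP ->.
case: n => [|k]; first by rewrite !annr0.
elim: k => [|k IH] y.
  move/annr1 => hy; apply/annr1 => _ [l [Cl ->]].
  rewrite mulr_suml big1_seq // => p /andP[_ pl].
  have [c' Cc' hc'] := absorb _ p.2 (Cl _ pl).
  by have := hc' 1 y; rewrite !mul1r; apply; exact: hy.
move/annrS => hy; apply/annrS => _ [l [Cl ->]]; rewrite mulr_suml big_seq.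
apply: annr_sum => p pl; apply: IH => a ha.
have [c' Cc' hc'] := absorb _ p.2 (Cl _ pl).
by rewrite !mulrA; apply: hc'; rewrite -mulrA; exact: hy.
Qed.

End RightIdealGenerated.

Section SkewSeries.
Local Open Scope ring_scope.
Variables (R : pzRingType) (S : choiceType) (op : S -> S -> S) (one : S)
          (le : S -> S -> Prop) (omega : S -> {rmorphism R -> R}).
Hypothesis hS : strictly_ordered_monoid op one le.
Hypothesis homega : monoid_hom_End op one omega.
Hypothesis hcomp : S_compatible omega.
Hypothesis harm : S_omega_Armendariz op le omega.

Notation A := (@skew_series R S le).
Notation mul := (ss_mul op omega).
Notation zero := (@ss_zero R S).

Let le_po : is_partial_order le. Proof. by case: hS => -[]. Qed.
Let op1x x : op one x = x. Proof. by case: hS => -[[]]. Qed.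
Let opx1 x : op x one = x. Proof. by case: hS => -[[]]. Qed.
Let omega1 a : omega one a = a. Proof. by case: homega. Qed.
Let omegaM s t a : omega (op s t) a = omega s (omega t a).
Proof. by case: homega => _; apply. Qed.

Lemma skew_seriesP f : A f <-> wqo le (supp f).
Proof.
split=> [[hart hnar]|hw]; first exact: artinian_narrow_wqo.
by split; [exact: wqo_artinian | exact: wqo_narrow].
Qed.

Lemma Xs_finite f g s : A f -> A g -> finite_set (Xs op f g s).
Proof.
by move=> /skew_seriesP wf /skew_seriesP wg; exact: (finite_factorizations hS s wf wg).
Qed.

Lemma supp_ss_mul f g :
  supp (mul f g) `<=` [set op u v | u in supp f & v in supp g].
Proof.
move=> s; apply: contra_notP => hn; rewrite /ss_mul fsbig1 // => -[u v] [/= uv [fu gv]].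
by case: hn; exists u => //; exists v.
Qed.

Lemma skew_series_mul f g : A f -> A g -> A (mul f g).
Proof.
move=> /skew_seriesP wf /skew_seriesP wg; apply/skew_seriesP.
apply: wqo_subset (@supp_ss_mul f g) _; exact: (wqo_image2 hS wf wg).
Qed.

Definition ss_const (b : R) : S -> R := fun s => if s == one then b else 0.

Lemma skew_series_const b : A (ss_const b).
Proof.
apply/skew_seriesP => a ha; exists 0%N, 1%N; split => //.
have a1 n : a n = one by move: (ha n); rewrite /supp /ss_const /=; case: eqP.
by rewrite !a1; case: le_po.
Qed.

Lemma ss_mul_constr f b : mul f (ss_const b) = fun s => f s * omega s b.
Proof.
apply: funext => s.
rewrite /ss_mul (fsbig_widen _ [set (s, one)]) ?fsbig_set1 /= /ss_const ?eqxx //.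
  by move=> [u w] [/= <- [_]]; case: eqP => // ->; rewrite opx1.
move=> _ [-> Xsn] /=; rewrite eqxx; apply: contra_notP Xsn => nz.
split=> /=; first exact: opx1.
split=> [f0|]; first by apply: nz; rewrite f0 mul0r.
by rewrite eqxx => b0; apply: nz; rewrite b0 rmorph0 mulr0.
Qed.

Lemma ss_mul_constl b f : mul (ss_const b) f = fun s => b * f s.
Proof.
apply: funext => s.
rewrite /ss_mul (fsbig_widen _ [set (one, s)]) ?fsbig_set1 /= /ss_const
  ?eqxx ?omega1 //.
  by move=> [u w] [/= <- []]; case: eqP => // -> _; rewrite op1x.
move=> _ [-> Xsn] /=; rewrite eqxx omega1; apply: contra_notP Xsn => nz.
split=> /=; first exact: op1x.
split=> [|f0]; last by apply: nz; rewrite f0 mulr0.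
by rewrite eqxx => b0; apply: nz; rewrite b0 mul0r.
Qed.

Lemma ss_mulA_const h f b : A h -> A f ->
  mul h (mul f (ss_const b)) = fun s => mul h f s * omega s b.
Proof.
move=> Ah Af; apply: funext => s.
rewrite ss_mul_constr /ss_mul (fsbig_widen _ (Xs op h f s)).
- have Xfin := Xs_finite s Ah Af.
  rewrite !fsbig_finite // mulr_suml; apply: eq_big_seq => -[u v].
  by rewrite in_fset_set // => /set_mem[/= <- _]; rewrite rmorphM omegaM mulrA.
- move=> [u v] [/= uv [hu fvb]]; split => //; split => // fv0.
  by apply: fvb; rewrite fv0 mul0r.
move=> [u v] [[/= uv [hu fv]] notX]; rewrite /preimage /=.
suff -> : f v * omega v b = 0 by rewrite rmorph0 mulr0.
by apply: contra_notP notX.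
Qed.

Definition coefs (X : set (S -> R)) : set R := [set f s | f in X & s in [set: S]].

Lemma setpow_skew_series (X : set (S -> R)) n : X `<=` A -> setpow mul X n `<=` A.
Proof.
move=> XA; case: n => [|k]; first by rewrite setpow0 => ? [].
elim: k => [|k IH] h; first by rewrite setpow1; apply: XA.
case/setpowS => [h' [f [h1 Xf ->]]].
by apply: skew_series_mul; [exact: IH h1 | exact: XA Xf].
Qed.

Lemma setpow_coef_annr (X : set (S -> R)) k h u y : X `<=` A ->
  setpow mul X k.+1 h -> annr (coefs X) k.+1 y -> h u * y = 0.
Proof.
move=> XA; elim: k => [|k IH] in h u y *.
  by rewrite setpow1 => Xh /annr1; apply; exists h => //; exists u.
case/setpowS => [h' [f [h1 Xf ->]]] /annrS hy.
have Ah' := setpow_skew_series XA h1.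
rewrite /ss_mul fsbig_finite; last exact: (Xs_finite _ Ah' (XA _ Xf)).
rewrite mulr_suml big1 // => -[v w] _ /=.
apply/(hcomp v _ _).2; rewrite -mulrA -rmorphM; apply/(hcomp v _ _).1.
by apply: (IH _ _ _ h1); apply: hy; exists f => //; exists w.
Qed.

(* In the induction step, [f * c_(g t)] for [f] in [X] is annihilated by
   [X^(k+1)]: [(h f)(s) omega_s (g t) = 0] by the Armendariz property applied
   to [(h f) g = 0]. *)
Lemma coef_annr_of_rann (X : set (S -> R)) k g : X `<=` A -> A g ->
  (forall h, setpow mul X k.+1 h -> mul h g = zero) ->
  forall t, annr (coefs X) k.+1 (g t).
Proof.
move=> XA; elim: k => [|k IH] in g * => Ag hg t.
  apply/annr1 => _ [f Xf [v _ <-]]; apply/(hcomp v _ _).2.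
  by apply: (harm (XA _ Xf) Ag); apply: hg; rewrite setpow1.
apply/annrS => _ [f Xf [v _ <-]].
have Afg : A (mul f (ss_const (g t))).
  by apply: skew_series_mul; [exact: XA | exact: skew_series_const].
have hfg h : setpow mul X k.+1 h -> mul h (mul f (ss_const (g t))) = zero.
  move=> Xh; have Ah := setpow_skew_series XA Xh.
  rewrite ss_mulA_const //; last exact: XA.
  apply: funext => s; apply: (harm _ Ag); first exact: skew_series_mul (XA _ Xf).
  by apply: hg; apply/setpowS; exists h, f.
move: (IH _ Afg hfg v); rewrite ss_mul_constr => hv a ha.
by rewrite mulrA; apply/(hcomp v _ _).2; rewrite -mulrA; exact: hv.
Qed.

Lemma rann_setpowE (X : set (S -> R)) n g : X `<=` A -> (0 < n)%N -> A g ->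
  rann A zero mul (setpow mul X n) g <-> forall t, annr (coefs X) n (g t).
Proof.
case: n => // k XA _ Ag; split=> [[_ hg] | hg]; first exact: coef_annr_of_rann.
split=> // h Xh; apply: funext => s; rewrite /ss_mul /ss_zero fsbig1 // => -[u v] _.
by apply/(hcomp u _ _).1; exact: setpow_coef_annr Xh (hg v).
Qed.

Lemma ss_const_idempotent e : e * e = e ->
  mul (ss_const e) (ss_const e) = ss_const e.
Proof.
move=> ee; rewrite ss_mul_constl; apply: funext => s.
by rewrite /ss_const; case: eqP; rewrite ?mulr0.
Qed.

Lemma rann_setpow_const (X : set (S -> R)) n e : X `<=` A -> (0 < n)%N ->
  e * e = e -> annr (coefs X) n = lprinc [set: R] *%R e ->
  [/\ (0 < n)%N, A (ss_const e), Defs.idempotent mul (ss_const e) &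
      rann A zero mul (setpow mul X n) = lprinc A mul (ss_const e)].
Proof.
move=> XA n0 ee annrE; split=> //; first exact: skew_series_const.
  exact: ss_const_idempotent.
apply/seteqP; split=> [g hg | _ [a Aa <-]].
  have Ag : A g by case: hg.
  exists g => //; rewrite ss_mul_constl; apply: funext => t.
  have := (rann_setpowE XA n0 Ag).1 hg t; rewrite annrE => -[r _ <-].
  by rewrite mulrA ee.
have Aea : A (mul (ss_const e) a).
  by apply: skew_series_mul => //; exact: skew_series_const.
apply/(rann_setpowE XA n0 Aea) => t; rewrite ss_mul_constl annrE.
by exists (a t).
Qed.

(* [(f c_r)(s) = f(s) omega_s(r)], and compatibility lets [omega_s(r)] stand
   in for [r]. *)
Lemma coefs_right_ideal_absorb (I : set (S -> R)) :
  right_ideal A zero (@ss_add R S) (@ss_opp R S) mul I ->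
  forall c r, coefs I c -> exists2 c', coefs I c' &
    forall a y, a * c' * y = 0 -> a * c * r * y = 0.
Proof.
case=> _ _ _ _ Imul c r [f If [s _ <-]].
exists (mul f (ss_const r) s).
  exists (mul f (ss_const r)); last by exists s.
  by apply: Imul => //; exact: skew_series_const.
rewrite ss_mul_constr => a y h.
rewrite -(mulrA (a * f s)); apply/(hcomp s _ _).2; rewrite rmorphM mulrA.
by apply/(hcomp s _ _).1; move: h; rewrite mulrA.
Qed.

End SkewSeries.

Theorem proposition3p6 (R : pzRingType) (S : choiceType) (op : S -> S -> S)
    (one : S) (le : S -> S -> Prop) (omega : S -> {rmorphism R -> R})
    (hS : strictly_ordered_monoid op one le)
    (hqt : quasitotally_ordered op one le)
    (homega : monoid_hom_End op one omega)
    (hcomp : S_compatible omega)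
    (harm : S_omega_Armendariz op le omega) :
  (ring_gen_right_Baer R -> series_gen_right_Baer op le omega) /\
  (ring_gen_right_quasi_Baer R -> series_gen_right_quasi_Baer op le omega).
Proof.
split=> [hRB X XA [f Xf] | hRQ J hJ].
  have X0 : coefs X !=set0 by exists (f one), f => //; exists one.
  have [n [e [n0 _ ee hR]]] := hRB (coefs X) (fun _ _ => I) X0.
  rewrite rann_setT in hR.
  by exists n, (ss_const one e); exact: (rann_setpow_const hS homega hcomp harm).
have JA : J `<=` skew_series le by case: hJ.
have [n [e [n0 _ ee hR]]] := hRQ _ (right_ideal_gen (coefs J)).
rewrite rann_setT annr_rideal_gen in hR.
  by exists n, (ss_const one e); exact: (rann_setpow_const hS homega hcomp harm).
exact: (coefs_right_ideal_absorb hS hcomp hJ).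
Qed.
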